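(* Let $\Gamma$ be any simple graph and $d\geq 1$ an integer. Then $$\{|C| \;:\; C\subseteq V(\Gamma),\ d_\Gamma(C)=d\}=\{|C| \;:\; C\subseteq V(\Gamma),\ d_\Gamma(C)\geq d\},$$ where $d_\Gamma(C)=\min\{d_\Gamma(x,y)\;:\; x,y\in C,\ x\neq y\}$.
   Context: For a simple graph $\Gamma$, $d_\Gamma(x,y)$ denotes the length (number of edges) of a shortest path between vertices $x$ and $y$ of $\Gamma$. *)

From Stdlib Require Import Arith ClassicalEpsilon.

Definition simple_graph {T : Type} (adj : T -> T -> Prop) : Prop :=
  (forall x y, adj x y -> adj y x) /\ (forall x, ~ adj x x).

Inductive walk {T : Type} (adj : T -> T -> Prop) : nat -> T -> T -> Prop :=
| walk0 : forall x, walk adj 0 x x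
| walkS : forall n x y z, adj x y -> walk adj n y z -> walk adj (S n) x z.

Definition connected_graph {T : Type} (adj : T -> T -> Prop) : Prop :=
  forall x y : T, exists n, walk adj n x y.

Definition is_graph_dist {T : Type} (adj : T -> T -> Prop) (x y : T) (n : nat) : Prop :=
  walk adj n x y /\ forall m, walk adj m x y -> n <= m.

(* d_Gamma(x,y); meaningful when x and y are connected (always, for connected graphs) *)
Definition gdist {T : Type} (adj : T -> T -> Prop) (x y : T) : nat :=
  epsilon (inhabits 0) (fun n => is_graph_dist adj x y n).

Definition code_dist_eq {T : Type} (adj : T -> T -> Prop) (C : T -> Prop) (d : nat) : Prop :=
  (exists x y, C x /\ C y /\ x <> y /\ gdist adj x y = d) /\
  (forall x y, C x -> C y -> x <> y -> d <= gdist adj x y).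

(* d_Gamma(C) >= d, with d_Gamma(C) defined (C has two distinct elements) *)
Definition code_dist_ge {T : Type} (adj : T -> T -> Prop) (C : T -> Prop) (d : nat) : Prop :=
  (exists x y, C x /\ C y /\ x <> y) /\
  (forall x y, C x -> C y -> x <> y -> d <= gdist adj x y).

Definition equipotent {T : Type} (A B : T -> Prop) : Prop :=
  exists (f : {x | A x} -> {x | B x}) (g : {x | B x} -> {x | A x}),
    (forall a, g (f a) = a) /\ (forall b, f (g b) = b).

(* If the minimum distance m of a code C exceeds d, choose x, y in C with
   d(x, y) = m and let v be the vertex at distance d from x on a shortest
   x-y path, so that d(v, y) = m - d < m; in particular v is not in C.
   Exchanging y for v therefore keeps |C|, and every
   other codeword z has d(z, v) >= d(z, y) - d(v, y) >= m - (m - d) = d, and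
   d(x, v) = d, so the new code has minimum distance exactly d. *)
From Stdlib Require Import Arith ClassicalEpsilon.
From Stdlib Require Import Lia ProofIrrelevance.

Section Walks.
Context {T : Type} (adj : T -> T -> Prop).

Lemma walk_cat n m x y z :
  walk adj n x y -> walk adj m y z -> walk adj (n + m) x z.
Proof.
  intros Hxy; revert m z.
  induction Hxy as [|n x w y Hxw _ IH]; intros m z Hyz; simpl; auto.
  apply walkS with w; auto.
Qed.

Lemma walk_sym (adj_sym : forall x y, adj x y -> adj y x) n x y :
  walk adj n x y -> walk adj n y x.
Proof.
  induction 1 as [x|n x w y Hxw _ IH]; [constructor|].
  rewrite <- Nat.add_1_r.
  apply walk_cat with w; auto.
  apply walkS with x; [auto | constructor].
Qed.

Lemma walk_split n x y k :
  walk adj n x y -> k <= n -> exists v, walk adj k x v /\ walk adj (n - k) v y.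
Proof.
  intros Hxy; revert k.
  induction Hxy as [x|n x w y Hxw Hwy IH]; intros [|k] Hk.
  - exists x; split; constructor.
  - lia.
  - exists x; split; [constructor | simpl; apply walkS with w; auto].
  - destruct (IH k) as [v [Hwv Hvy]]; [lia|].
    exists v; split; [apply walkS with w|]; auto.
Qed.

End Walks.

Section Distance.
Context {T : Type} (adj : T -> T -> Prop).
Hypothesis adj_sym : forall x y, adj x y -> adj y x.
Hypothesis adj_connected : connected_graph adj.

Lemma gdist_spec x y : is_graph_dist adj x y (gdist adj x y).
Proof.
  unfold gdist; apply epsilon_spec.
  destruct (dec_inh_nat_subset_has_unique_least_element (fun n => walk adj n x y))
    as [n [[Hn Hmin] _]].
  - intros n; apply classic.
  - apply adj_connected.
  - exists n; split; auto.
Qed.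

Lemma gdist_walk x y : walk adj (gdist adj x y) x y.
Proof. apply gdist_spec. Qed.

Lemma gdist_min n x y : walk adj n x y -> gdist adj x y <= n.
Proof. apply gdist_spec. Qed.

Lemma gdist_xx x : gdist adj x x = 0.
Proof. apply Nat.le_0_r, gdist_min, walk0. Qed.

Lemma gdist_sym x y : gdist adj x y = gdist adj y x.
Proof. apply Nat.le_antisymm; apply gdist_min, walk_sym, gdist_walk; auto. Qed.

Lemma gdist_triangle x y z : gdist adj x z <= gdist adj x y + gdist adj y z.
Proof. apply gdist_min; apply walk_cat with y; apply gdist_walk. Qed.

Lemma gdist_between x y k : k <= gdist adj x y ->
  exists v, gdist adj x v = k /\ gdist adj v y = gdist adj x y - k.
Proof.
  intros Hk.
  destruct (walk_split adj _ _ _ k (gdist_walk x y) Hk) as [v [Hxv Hvy]].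
  apply gdist_min in Hxv, Hvy.
  pose proof (gdist_triangle x v y).
  exists v; split; lia.
Qed.

Lemma code_dist_exists (C : T -> Prop) :
  (exists x y, C x /\ C y /\ x <> y) -> exists m, code_dist_eq adj C m.
Proof.
  intros Hpair.
  destruct (dec_inh_nat_subset_has_unique_least_element
              (fun m => exists x y, C x /\ C y /\ x <> y /\ gdist adj x y = m))
    as [m [[Hm Hmin] _]].
  - intros m; apply classic.
  - destruct Hpair as (x & y & Hx & Hy & Hxy); eauto 7.
  - exists m; split; [exact Hm|].
    intros x y Hx Hy Hxy; apply Hmin; eauto 7.
Qed.

Lemma code_dist_eq_ge (C : T -> Prop) d :
  code_dist_eq adj C d -> code_dist_ge adj C d.
Proof. intros [(x & y & Hx & Hy & Hxy & _) Hmin]; split; eauto 7. Qed.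

Definition exchange (C : T -> Prop) (y v : T) : T -> Prop :=
  fun t => (C t /\ t <> y) \/ t = v.

Lemma code_dist_exchange (C : T -> Prop) m d :
  code_dist_eq adj C m -> 1 <= d < m ->
  exists y v, C y /\ ~ C v /\ code_dist_eq adj (exchange C y v) d.
Proof.
  intros [(x & y & Hx & Hy & Hxy & Hm) Hmin] Hd.
  destruct (gdist_between x y d) as (v & Hxv & Hvy); [lia|].
  assert (Hfar : forall z, C z -> z <> y -> d <= gdist adj z v).
  { intros z Hz Hzy.
    pose proof (Hmin z y Hz Hy Hzy); pose proof (gdist_triangle z v y); lia. }
  assert (Hvy_neq : v <> y) by (intros ->; lia).
  assert (Hv : ~ C v).
  { intros Hv; pose proof (Hfar v Hv Hvy_neq); rewrite gdist_xx in *; lia. }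
  exists y, v; repeat split; auto.
  - exists x, v; repeat split; unfold exchange; auto.
    intros ->; rewrite gdist_xx in Hxv; lia.
  - intros a b [[Ha Hay]| ->] [[Hb Hby]| ->] Hab; auto.
    + pose proof (Hmin a b Ha Hb Hab); lia.
    + rewrite gdist_sym; auto.
    + congruence.
Qed.

End Distance.

Section Equipotence.
Context {T : Type}.

Lemma equipotent_trans (A B C : T -> Prop) :
  equipotent A B -> equipotent B C -> equipotent A C.
Proof.
  intros (f & g & Hgf & Hfg) (f' & g' & Hgf' & Hfg').
  exists (fun a => f' (f a)), (fun c => g (g' c)).
  split; intros; [rewrite Hgf' | rewrite Hfg]; auto.
Qed.

Lemma equipotent_involution (A B : T -> Prop) (s : T -> T) :
  (forall t, s (s t) = t) -> (forall t, B t <-> A (s t)) -> equipotent B A.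
Proof.
  intros Hs HBA.
  assert (HAB : forall t, A t -> B (s t)) by (intros t; rewrite HBA, Hs; auto).
  exists (fun b => exist _ (s (proj1_sig b)) (proj1 (HBA _) (proj2_sig b))).
  exists (fun a => exist _ (s (proj1_sig a)) (HAB _ (proj2_sig a))).
  split; intros [t Ht]; apply subset_eq_compat; apply Hs.
Qed.

Definition transposition (y v t : T) : T :=
  if excluded_middle_informative (t = y) then v
  else if excluded_middle_informative (t = v) then y else t.

Lemma transpositionK y v t : transposition y v (transposition y v t) = t.
Proof.
  unfold transposition.
  repeat (destruct excluded_middle_informative; subst); congruence.
Qed.

Lemma equipotent_exchange (C : T -> Prop) y v :
  C y -> ~ C v -> equipotent (exchange C y v) C.
Proof.
  intros Hy Hv.
  apply equipotent_involution with (transposition y v); [apply transpositionK|].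
  intros t; unfold exchange, transposition.
  repeat (destruct excluded_middle_informative; subst); intuition congruence.
Qed.

End Equipotence.

Theorem proposition2p1 (T : Type) (adj : T -> T -> Prop) (d : nat)
  (Hg : simple_graph adj) (Hc : connected_graph adj) (Hd : 1 <= d) :
  forall C : T -> Prop,
    (exists C1, code_dist_eq adj C1 d /\ equipotent C1 C) <->
    (exists C2, code_dist_ge adj C2 d /\ equipotent C2 C).
Proof.
  intros C; split.
  - intros (C1 & HC1 & HC1C).
    exists C1; split; auto using code_dist_eq_ge.
  - intros (C2 & [Hpair Hmin] & HC2).
    destruct (code_dist_exists adj C2 Hpair) as [m Hm].
    assert (Hdm : d <= m).
    { destruct Hm as [(x & y & Hx & Hy & Hxy & <-) _]; auto. }
    destruct (le_lt_eq_dec d m Hdm) as [Hlt | <-]; [| eauto].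
    destruct (code_dist_exchange adj (proj1 Hg) Hc C2 m d Hm)
      as (y & v & Hy & Hv & Hex); [lia|].
    exists (exchange C2 y v); split; [exact Hex|].
    apply equipotent_trans with C2; auto using equipotent_exchange.
Qed.
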